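(* Let $(X,\mathcal{B})$ be a $t$-$(v,k,1)$-design (with $2\le t<k<v$) and let $B \in \mathcal{B}$. Let $p$ be the probability that a block is available and $q = 1-p$. Then \[\mathcal{R}(p) = 1 + \sum_{i=1}^{k} (-1)^{i}\binom{k}{i} q^{e_i},\] where $r_j = \binom{v-j}{t-j}\big/\binom{k-j}{t-j}$ for $1 \le j \le t$, and \[e_i = \sum_{j=1}^{\min\{i,t-1\}} (-1)^{j+1}\binom{i}{j}(r_j - 1), \quad 1 \le i \le k.\]
   Context: A $t$-$(v,k,\lambda)$-design is a set $X$ of $v$ points together with a collection $\mathcal{B}$ of $k$-subsets of $X$ (blocks) such that every $t$-subset of $X$ lies in exactly $\lambda$ blocks; for $\lambda=1$, $r_j$ as given is the number of blocks containing any fixed set of $j$ points. Reliability model: fix a block $B\in\mathcal{B}$. A repair set for $B$ is a subset $\mathcal{P}\subseteq \mathcal{B}\setminus\{B\}$ with $B \subseteq \bigcup_{B'\in\mathcal{P}} B'$. Each block of $\mathcal{B}\setminus\{B\}$ is, independently of the others, available with probability $p\in[0,1]$; a repair set is available if all of its blocks are available. $\mathcal{R}(p)$ is the probability that at least one available repair set for $B$ exists. *)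

From HB Require Import structures.
From mathcomp Require Import all_boot all_order all_algebra.
Set Implicit Arguments. Unset Strict Implicit. Unset Printing Implicit Defensive.
Import Order.TTheory GRing.Theory Num.Theory.

Definition is_design1 (T : finType) (blocks : {set {set T}}) (t k : nat) : Prop :=
  (forall b, b \in blocks -> #|b| = k) /\
  (forall S : {set T}, #|S| = t -> #|[set b in blocks | S \subset b]| = 1%N).

Definition repair_set (T : finType) (blocks : {set {set T}}) (B0 : {set T})
  (P : {set {set T}}) : bool :=
  (P \subset blocks :\ B0) && (B0 \subset \bigcup_(b in P) b).

Local Open Scope ring_scope.

(* R(p): each block of blocks \ {B0} is available independently with prob. p;
   probability that some repair set consisting of available blocks exists. *)
Definition reliability (R : realFieldType) (T : finType)
  (blocks : {set {set T}}) (B0 : {set T}) (p : R) : R :=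
  \sum_(A in powerset (blocks :\ B0))
     (p ^+ #|A| * (1 - p) ^+ #|(blocks :\ B0) :\: A| *
      (if [exists P in powerset A, repair_set blocks B0 P] then 1 else 0)).

(* r_j = C(v-j, t-j) / C(k-j, t-j)  (an integer for a design) *)
Definition r_des (v k t j : nat) : nat := ('C(v - j, t - j) %/ 'C(k - j, t - j))%N.

Definition e_des (v k t i : nat) : int :=
  \sum_(1 <= j < (minn i (t - 1)).+1)
     ((-1) ^+ j.+1 * ('C(i, j))%:Z * ((r_des v k t j)%:Z - 1)).

From mathcomp Require Import all_boot all_order all_algebra.
From mathcomp Require Import zify.
Set Implicit Arguments. Unset Strict Implicit. Unset Printing Implicit Defensive.
Import Order.TTheory GRing.Theory Num.Theory.
Local Open Scope ring_scope.

(* The set A of available blocks contains a repair set iff A itself is one,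
   so R(p) is the probability that the available blocks cover B0.  By
   inclusion-exclusion over the parts S of B0 left uncovered, and since S is
   uncovered exactly when the N(S) other blocks meeting S are all unavailable,
   R(p) = sum_(S <= B0) (-1)^|S| q^N(S).  A second inclusion-exclusion writes
   N(S) through the numbers of blocks containing the subsets J of S; in a
   t-(v,k,1) design these depend only on |J| (they are r_|J|, by double
   counting t-subsets, and 1 once |J| >= t), whence N(S) = e_|S|. *)

Section PowersetSums.
Variable T : finType.

Lemma sum_powerset_card (R : nmodType) (X : {set T}) (F : nat -> R) :
  \sum_(S in powerset X) F #|S| = \sum_(0 <= i < #|X|.+1) F i *+ 'C(#|X|, i).
Proof.
rewrite big_mkord (partition_big (fun S : {set T} => inord #|S| : 'I_#|X|.+1) xpredT) //=.
apply: eq_bigr => i _.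
rewrite (eq_bigl [in [set S : {set T} | (S \subset X) && (#|S| == i)]]); last first.
  move=> S; rewrite [in RHS]inE powersetE; case: (boolP (S \subset X)) => //= sSX.
  have leSX : (#|S| < #|X|.+1)%N by rewrite ltnS subset_leq_card.
  by rewrite -(inj_eq val_inj) /= inordK.
transitivity (\sum_(S in [set S : {set T} | (S \subset X) && (#|S| == i)]) F i).
  by apply: eq_bigr => S; rewrite inE => /andP[_ /eqP->].
by rewrite sumr_const cards_draws.
Qed.

Lemma sum_powerset_subset_sign (R : comNzRingType) (X Y : {set T}) :
  \sum_(S in powerset X | S \subset Y) (-1 : R) ^+ #|S| = (X :&: Y == set0)%:R.
Proof.
rewrite (eq_bigl [in powerset (X :&: Y)]); last first.
  by move=> S; rewrite !powersetE subsetI.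
rewrite (sum_powerset_card _ (fun i => (-1 : R) ^+ i)) -cards_eq0 -expr0n -[in RHS](subrr 1).
by rewrite exprDn big_mkord; apply: eq_bigr => i _; rewrite expr1n mul1r.
Qed.

Lemma sum_powerset_binomial_weight (R : comNzRingType) (U W : {set T}) (p q : R) :
  p + q = 1 -> W \subset U ->
  \sum_(A in powerset W) p ^+ #|A| * q ^+ #|U :\: A| = q ^+ #|U :\: W|.
Proof.
move=> hpq sWU.
have cardUD (A : {set T}) : A \subset W -> #|U :\: A| = (#|W| - #|A| + #|U :\: W|)%N.
  move=> sAW; rewrite !cardsD (setIidPr (subset_trans sAW sWU)) (setIidPr sWU).
  by have := subset_leq_card sAW; have := subset_leq_card sWU; lia.
rewrite (eq_bigr (fun A : {set T} => p ^+ #|A| * q ^+ (#|W| - #|A|) * q ^+ #|U :\: W|)); last first.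
  by move=> A; rewrite powersetE => /cardUD->; rewrite exprD mulrA.
rewrite -big_distrl /= (sum_powerset_card _ (fun i => p ^+ i * q ^+ (#|W| - i))).
rewrite -[RHS]mul1r -(expr1n _ #|W|) -hpq addrC exprDn big_mkord; congr (_ * _).
by apply: eq_bigr => i _; rewrite mulrC.
Qed.

Lemma natr_card_set (R : nzSemiRingType) (I : finType) (A : {set I}) (P : pred I) :
  #|[set x in A | P x]|%:R = \sum_(x in A) (if P x then 1 else 0) :> R.
Proof.
rewrite -big_mkcondr sumr_const; congr (_ *+ _).
by apply: eq_card => x; rewrite !inE.
Qed.

Lemma card_meeting_incl_excl (R : comNzRingType) (U : {set {set T}}) (S : {set T}) :
  #|[set b in U | ~~ [disjoint b & S]]|%:R =
  #|U|%:R - \sum_(J in powerset S) (-1 : R) ^+ #|J| * #|[set b in U | J \subset b]|%:R.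
Proof.
transitivity (\sum_(b in U) (1 - \sum_(J in powerset S | J \subset b) (-1 : R) ^+ #|J|)).
  rewrite natr_card_set; apply: eq_bigr => b _.
  rewrite sum_powerset_subset_sign setI_eq0 [in RHS]disjoint_sym.
  by case: [disjoint b & S]; rewrite /= ?mulr1n ?mulr0n ?subrr ?subr0.
rewrite sumrB sumr_const; congr (_ - _).
under eq_bigr do rewrite big_mkcondr.
rewrite exchange_big /=; apply: eq_bigr => J _.
rewrite natr_card_set big_distrr /=.
by apply: eq_bigr => b _; case: (J \subset b); rewrite ?mulr1 ?mulr0.
Qed.

Lemma card_between_draws (J X : {set T}) (n : nat) :
  J \subset X -> (#|J| <= n)%N ->
  #|[set S : {set T} | (J \subset S) && (S \subset X) && (#|S| == n)]| =
  'C(#|X| - #|J|, n - #|J|).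
Proof.
move=> sJX leJn.
have cardXJ : #|X :\: J| = (#|X| - #|J|)%N by rewrite cardsD (setIidPr sJX).
rewrite -cardXJ -cards_draws.
have setUDK (D : {set T}) : [disjoint D & J] -> (D :|: J) :\: J = D.
  by move=> dDJ; rewrite setDUl setDv setU0 (setDidPl dDJ).
rewrite -[RHS](card_in_imset (f := fun D : {set T} => D :|: J)); last first.
  move=> D1 D2; rewrite !inE !subsetD => /andP[/andP[_ d1] _] /andP[/andP[_ d2] _] E.
  by rewrite -(setUDK _ d1) -(setUDK _ d2) /= E.
apply: eq_card => S; rewrite !inE; apply/idP/imsetP.
- case/andP => /andP[sJS sSX] /eqP cS; exists (S :\: J).
    by rewrite inE setSD //= cardsD (setIidPr sJS) cS eqxx.
  by rewrite setUC -[J in J :|: _](setIidPr sJS) setID.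
- case=> D; rewrite inE subsetD => /andP[/andP[sDX dDJ] /eqP cD] ->.
  rewrite subsetUr subUset sDX sJX /= cardsU (disjoint_setI0 dDJ) cards0 subn0 cD.
  by rewrite subnK.
Qed.

End PowersetSums.

Section Reliability.
Variables (R : realFieldType) (T : finType) (blocks : {set {set T}}) (B0 : {set T}).

Lemma exists_repair_setE (A : {set {set T}}) : A \subset blocks :\ B0 ->
  [exists P in powerset A, repair_set blocks B0 P] = (B0 \subset \bigcup_(b in A) b).
Proof.
move=> sAU; apply/existsP/idP => [[P] | cover].
- rewrite powersetE => /andP[sPA /andP[_ coverP]].
  apply: (subset_trans coverP); apply/bigcupsP => b bP.
  exact/bigcup_sup/(subsetP sPA).
- by exists A; rewrite powersetE subxx /= /repair_set sAU cover.
Qed.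

Lemma reliability_meetingE (p : R) :
  reliability blocks B0 p =
  \sum_(S in powerset B0)
     (-1) ^+ #|S| * (1 - p) ^+ #|[set b in blocks :\ B0 | ~~ [disjoint b & S]]|.
Proof.
set U := blocks :\ B0.
have cover_incl_excl (Z : {set T}) :
    (if B0 \subset Z then 1 else 0 : R) =
    \sum_(S in powerset B0 | [disjoint S & Z]) (-1) ^+ #|S|.
  rewrite (eq_bigl (fun S => (S \in powerset B0) && (S \subset ~: Z))); last first.
    by move=> S; rewrite disjoints_subset.
  by rewrite sum_powerset_subset_sign -setDE setD_eq0; case: ifP.
pose W (S : {set T}) := [set b in U | [disjoint b & S]].
have disjoint_cover (S : {set T}) (A : {set {set T}}) : A \subset U ->
    [disjoint S & \bigcup_(b in A) b] = (A \subset W S).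
  move=> sAU; apply/bigcup_disjointP/subsetP => [disjA b bA | sAW b bA].
    by rewrite inE (subsetP sAU b bA) disjoint_sym disjA.
  by have := sAW b bA; rewrite inE disjoint_sym => /andP[].
rewrite /reliability -/U.
under eq_bigr => A.
  rewrite powersetE => sAU.
  rewrite (exists_repair_setE sAU) cover_incl_excl big_distrr /= big_mkcondr /=.
  under eq_bigr => S _ do rewrite (disjoint_cover S A sAU).
  over.
rewrite exchange_big /=; apply: eq_bigr => S _.
rewrite -big_mkcondr /= -big_distrl mulrC /=.
have sWU : W S \subset U by apply/subsetP => b; rewrite inE => /andP[].
rewrite (eq_bigl [in powerset (W S)]); last first.
  move=> A; rewrite !powersetE; apply/andP/idP => [[] // | sAW].
  by split; first exact: subset_trans sAW sWU.
rewrite sum_powerset_binomial_weight //; last by rewrite addrC subrK.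
congr (_ ^+ _ * _); apply: eq_card => b; rewrite !inE.
by case: [disjoint b & S]; case: (b != B0); case: (b \in blocks).
Qed.

End Reliability.

Lemma r_des_ge (v k t j : nat) : (t <= j)%N -> r_des v k t j = 1%N.
Proof. by move=> le_tj; rewrite /r_des (eqP le_tj) !bin0. Qed.

Lemma e_des_incl_excl (v k t n : nat) :
  e_des v k t n =
  - \sum_(1 <= i < n.+1) ((-1) ^+ i * ((r_des v k t i)%:Z - 1)) *+ 'C(n, i).
Proof.
rewrite /e_des -sumrN [RHS](big_cat_nat _ (n := (minn n (t - 1)).+1)) //=; last first.
  by rewrite ltnS geq_minl.
rewrite [X in _ = _ + X]big_nat_cond [X in _ = _ + X]big1 ?addr0; last first.
  move=> i /andP[/andP[lo hi] _].
  by rewrite r_des_ge ?subrr ?mulr0 ?mul0rn ?oppr0 //; lia.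
apply: eq_bigr => j _.
by rewrite -mulr_natr -natz exprS mulN1r !mulNr mulrAC.
Qed.

Section Design.
Variables (T : finType) (blocks : {set {set T}}) (t k : nat).
Hypothesis design : is_design1 blocks t k.
Hypothesis letk : (t <= k)%N.

Lemma design_card_blocks_supset_mul (J : {set T}) : (#|J| <= t)%N ->
  (#|[set b in blocks | J \subset b]| * 'C(k - #|J|, t - #|J|))%N =
  'C(#|T| - #|J|, t - #|J|).
Proof.
move=> leJt; case: design => card_block unique_block.
pose flag (b S : {set T}) :=
  if (J \subset S) && (S \subset b) && (#|S| == t) then 1%N else 0%N.
have by_blocks : (\sum_(b in blocks) \sum_S flag b S)%N =
    (#|[set b in blocks | J \subset b]| * 'C(k - #|J|, t - #|J|))%N.
  rewrite -sum_nat_const big_mkcond [RHS]big_mkcond /=; apply: eq_bigr => b _.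
  rewrite inE; case: (boolP (b \in blocks)) => //= bB.
  rewrite -big_mkcond sum1dep_card; case: ifP => sJb.
    by rewrite -(card_block b bB) -card_between_draws.
  apply/eqP; rewrite cards_eq0; apply/eqP/setP => S; rewrite !inE.
  by apply/negbTE/negP => /andP[/andP[sJS sSb] _]; rewrite (subset_trans sJS sSb) in sJb.
have by_tsets : (\sum_S \sum_(b in blocks) flag b S)%N = 'C(#|T| - #|J|, t - #|J|).
  rewrite -cardsT -card_between_draws ?subsetT // -sum1dep_card [RHS]big_mkcond /=.
  apply: eq_bigr => S _; rewrite subsetT andbT.
  case: ifP => [/andP[sJS /eqP cardS] | notS]; last first.
    by rewrite big1 // => b _; rewrite /flag -andbA andbCA notS andbF.
  rewrite -(unique_block S cardS) -sum1_card big_mkcond [RHS]big_mkcond /=.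
  by apply: eq_bigr => b _; rewrite inE /flag sJS cardS eqxx andbT; case: (b \in blocks).
by rewrite -by_blocks exchange_big.
Qed.

Lemma design_card_blocks_supset (B0 J : {set T}) : B0 \in blocks -> J \subset B0 ->
  #|[set b in blocks | J \subset b]| = r_des #|T| k t #|J|.
Proof.
move=> B0_block sJB0; rewrite /r_des.
(* For |J| > t the truncated subtractions make r_des equal to 1: only the
   block through a t-subset of J can contain J, and B0 does. *)
have [leJt | ltJ] := leqP #|J| t.
  rewrite -(design_card_blocks_supset_mul leJt) mulnK // bin_gt0 leq_sub2r //.
rewrite (eqP (ltnW ltJ)) !bin0 divnn /=.
have [S] : exists S : {set T}, S \in [set A : {set T} | A \subset J & #|A| == t].
  by apply/set0Pn; rewrite -card_gt0 cards_draws bin_gt0 ltnW.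
rewrite inE => /andP[sSJ /eqP cardS]; case: design => _ unique_block.
apply/eqP; rewrite eqn_leq; apply/andP; split.
  rewrite -(unique_block S cardS); apply: subset_leq_card; apply/subsetP => b.
  by rewrite !inE => /andP[-> sJb]; exact: subset_trans sSJ sJb.
by rewrite card_gt0; apply/set0Pn; exists B0; rewrite inE B0_block sJB0.
Qed.

Lemma design_card_other_blocks_supset (B0 J : {set T}) :
  B0 \in blocks -> J \subset B0 ->
  #|[set b in blocks :\ B0 | J \subset b]|.+1 = r_des #|T| k t #|J|.
Proof.
move=> B0_block sJB0; rewrite -(design_card_blocks_supset B0_block sJB0).
have -> : [set b in blocks | J \subset b] = B0 |: [set b in blocks :\ B0 | J \subset b].
  apply/setP => b; rewrite !inE.
  by case: (eqVneq b B0) => [-> | _] /=; rewrite ?B0_block ?sJB0.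
by rewrite cardsU1 !inE eqxx.
Qed.

Lemma design_card_blocks_meeting (B0 S : {set T}) : B0 \in blocks -> S \subset B0 ->
  #|[set b in blocks :\ B0 | ~~ [disjoint b & S]]|%:Z = e_des #|T| k t #|S|.
Proof.
move=> B0_block sSB0.
have other_blocks (J : {set T}) : J \subset S ->
    #|[set b in blocks :\ B0 | J \subset b]|%:R = (r_des #|T| k t #|J|)%:Z - 1.
  move=> sJS; rewrite -(design_card_other_blocks_supset B0_block (subset_trans sJS sSB0)).
  by rewrite natz -addn1 PoszD addrK.
have cardU : #|blocks :\ B0|%:R = (r_des #|T| k t 0)%:Z - 1.
  rewrite -(cards0 T) -other_blocks ?sub0set //.
  by congr (_ %:R); apply: eq_card => b; rewrite !inE sub0set andbT.
rewrite -natz card_meeting_incl_excl cardU.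
rewrite (eq_bigr (fun J : {set T} => (-1) ^+ #|J| * ((r_des #|T| k t #|J|)%:Z - 1))); last first.
  by move=> J; rewrite powersetE => /other_blocks->.
rewrite (sum_powerset_card _ (fun i => (-1) ^+ i * ((r_des #|T| k t i)%:Z - 1))).
rewrite big_ltn // bin0 expr0 mul1r mulr1n opprD addrA subrr add0r.
by rewrite e_des_incl_excl.
Qed.

End Design.

Theorem mainTheorem10 (R : realFieldType) (T : finType)
  (blocks : {set {set T}}) (v k t : nat)
  (hv : #|T| = v) (ht : (2 <= t)%N) (htk : (t < k)%N) (hkv : (k < v)%N)
  (hdes : is_design1 blocks t k)
  (B0 : {set T}) (hB0 : B0 \in blocks)
  (p : R) (hp0 : 0 <= p) (hp1 : p <= 1) :
  reliability blocks B0 p =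
    1 + \sum_(1 <= i < k.+1)
          ((-1) ^+ i * ('C(k, i))%:R * (1 - p) ^ (e_des v k t i)).
Proof.
(* The identity holds for all t <= k and all p; ht, hkv, hp0, hp1 are unused. *)
subst v; have cardB0 : #|B0| = k by case: hdes => card_block _; apply: card_block.
rewrite reliability_meetingE.
under eq_bigr => S.
  rewrite powersetE => sSB0.
  rewrite [(1 - p) ^+ _]exprnP (design_card_blocks_meeting hdes (ltnW htk) hB0 sSB0).
  over.
rewrite /= (sum_powerset_card _ (fun i => (-1) ^+ i * (1 - p) ^ e_des #|T| k t i)).
have e_des0 : e_des #|T| k t 0 = 0 by rewrite /e_des min0n big_geq.
rewrite cardB0 [LHS]big_ltn // bin0 e_des0 mulr1n expr0 mul1r expr0z.
by congr (_ + _); apply: eq_bigr => i _; rewrite -mulrnAl mulr_natr.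
Qed.
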